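(* Let $G$ be a graph on $n\geq 3$ vertices and let $k$ be an integer with $2\leq k<n$. Suppose that every connected graph $H$ on $N$ vertices with $2\leq N\leq n$ satisfies the implication $\psi_{N-1}(H)=2\Rightarrow \psi_N(H)=1$. Then $\psi_k(G)=n-k+1$ implies $\psi_j(G)=n-j+1$ for all integers $j$ with $k<j\leq n$.
   Context: All graphs are finite, simple and nonempty. For a graph $G$ and a positive integer $k$, a $k$-path vertex cover ($k$-PVC) of $G$ is a set $S$ of vertices such that every path on $k$ vertices in $G$ contains at least one vertex of $S$ (if $G$ has no path on $k$ vertices, the empty set is a $k$-PVC). $\psi_k(G)$ denotes the minimum cardinality of a $k$-PVC of $G$. *)

From mathcomp Require Import all_boot.
Set Implicit Arguments. Unset Strict Implicit. Unset Printing Implicit Defensive.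

Definition simple_graph (T : finType) (e : rel T) : Prop :=
  symmetric e /\ irreflexive e.

Definition connected_graph (T : finType) (e : rel T) : Prop :=
  forall x y : T, connect e x y.

Definition is_kpath (T : finType) (e : rel T) (k : nat) (s : seq T) : bool :=
  [&& size s == k, uniq s &
      (if s is x :: s' then path e x s' else true)].

(* (sequences of length k are enumerated as k-tuples, making this boolean) *)
Definition is_kpvc (T : finType) (e : rel T) (k : nat) (S : {set T}) : bool :=
  [forall t : k.-tuple T, is_kpath e k t ==> has (fun v => v \in S) t].

(* psi_k(G): minimum cardinality of a k-PVC (for k >= 1, [set: T] is a
   k-PVC, so the default #|T| of the fold is attained). *)
Definition psi (T : finType) (e : rel T) (k : nat) : nat :=
  \big[minn/#|T|]_(S : {set T} | is_kpvc e k S) #|S|.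

From mathcomp Require Import all_boot zify.
Set Implicit Arguments. Unset Strict Implicit. Unset Printing Implicit Defensive.

(* For 1 <= m <= n, psi_m(G) = n - m + 1 says exactly that every set of m
   vertices spans a path on m vertices: a cover of size n - m is escaped by a
   path in its complement, and any n - m + 1 vertices cover every m-path.
   If every j-set spans a j-path, then the graph H induced on any j + 1
   vertices is connected (two vertices lie in a common j-set) and has
   psi_j(H) = 2, so the hypothesis gives psi_(j+1)(H) = 1, i.e. H has a
   Hamiltonian path. *)

Lemma geq_bigmin_cond (I : eqType) (r : seq I) (P : pred I) (F : I -> nat) x i :
  i \in r -> P i -> \big[minn/x]_(j <- r | P j) F j <= F i.
Proof.
elim: r => // a r IHr; rewrite inE big_cons => /orP[/eqP <- -> | ir Pi].
  exact: geq_minl.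
by case: (P a); [apply: leq_trans (geq_minr _ _) _|]; apply: IHr.
Qed.

Section PathVertexCover.

Variables (T : finType) (e : rel T).

Lemma kpvcP k (S : {set T}) :
  reflect (forall s, is_kpath e k s -> has (mem S) s) (is_kpvc e k S).
Proof.
apply: (iffP forallP) => [cover s s_path | cover t]; last first.
  by apply/implyP; apply: cover.
have s_size : size s == k by case/and3P: s_path.
by have /implyP := cover (Tuple s_size); apply.
Qed.

Lemma kpvcPn k (S : {set T}) :
  reflect (exists2 s, is_kpath e k s & {subset s <= ~: S}) (~~ is_kpvc e k S).
Proof.
apply: (iffP idP) => [/forallPn[t] | [s s_path s_out]].
  rewrite negb_imply => /andP[t_path t_out]; exists t => // x xt.
  by rewrite in_setC; apply: contraNN t_out => xS; apply/hasP; exists x.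
apply/kpvcP => /(_ s s_path)/hasP[x xs xS].
by move: (s_out x xs); rewrite in_setC => /negP; apply.
Qed.

Lemma psi_le_card k (S : {set T}) : is_kpvc e k S -> psi e k <= #|S|.
Proof. by move=> S_cover; apply: geq_bigmin_cond; rewrite ?mem_index_enum. Qed.

Lemma leq_psi k m :
  (forall S : {set T}, is_kpvc e k S -> m <= #|S|) -> m <= #|T| -> m <= psi e k.
Proof.
move=> m_le_cover m_le_T; apply: (big_ind (fun x => m <= x)) => //.
by move=> x y mx my; rewrite leq_min mx my.
Qed.

Definition kpath_in_all_sets m :=
  forall W : {set T}, m <= #|W| -> exists2 s, is_kpath e m s & {subset s <= W}.

Lemma psi_upper_bound m : 0 < m <= #|T| -> psi e m <= #|T| - m + 1.
Proof.
move=> /andP[m_gt0 m_le_T].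
have /card_geqP[r [r_uniq r_size _]] : #|T| - m + 1 <= #|[set: T]|.
  by rewrite cardsT; lia.
have r_card : #|[set x in r]| = #|T| - m + 1 by rewrite cardsE (card_uniqP r_uniq).
rewrite -r_card; apply: psi_le_card; apply/negPn/kpvcPn.
move=> [s /and3P[/eqP s_size s_uniq _] s_out].
have : m <= #|~: [set x in r]| by apply/card_geqP; exists s.
by rewrite cardsCs setCK r_card; lia.
Qed.

Lemma psi_maxP m :
  0 < m <= #|T| -> psi e m = #|T| - m + 1 <-> kpath_in_all_sets m.
Proof.
move=> m_range; have /andP[m_gt0 m_le_T] := m_range.
split => [psi_max W m_W | all_sets].
  have /kpvcPn[s s_path s_out] : ~~ is_kpvc e m (~: W).
    by apply/negP => /psi_le_card; rewrite psi_max cardsCs setCK; lia.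
  by exists s => // x /s_out; rewrite setCK.
(* The finset lemmas and our statements elaborate [#|T|] to different
   (convertible) terms, which [lia] would take for distinct atoms; naming
   [#|T|] with [set] first identifies them. *)
apply/eqP; rewrite eqn_leq psi_upper_bound //=; apply: leq_psi.
  move=> S S_cover; rewrite leqNgt; apply/negP => S_small.
  have [s s_path s_out] : exists2 s, is_kpath e m s & {subset s <= ~: S}.
    by apply: all_sets; rewrite cardsCs setCK; set n := #|T| in m_le_T S_small *; lia.
  by move: S_cover; apply/negP/kpvcPn; exists s.
by set n := #|T| in m_le_T *; lia.
Qed.

Lemma kpath_connect m s x y :
  symmetric e -> is_kpath e m s -> x \in s -> y \in s -> connect e x y.
Proof.
move=> e_sym /and3P[_ _]; case: s => // z s /path_connect z_to xs ys.
apply: connect_trans (_ : connect e x z) (z_to _ ys).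
by rewrite (sym_connect_sym e_sym); apply: z_to.
Qed.

Lemma kpath_in_all_sets_connected m :
  symmetric e -> 2 <= m <= #|T| -> kpath_in_all_sets m -> connected_graph e.
Proof.
move=> e_sym /andP[m_ge2 m_le_T] all_sets a b.
have [-> | ab] := eqVneq a b; first exact: connect0.
have /card_geqP[r [r_uniq r_size r_out]] : m - 2 <= #|~: [set a; b]|.
  by rewrite cardsCs setCK cards2 ab; set n := #|T| in m_le_T *; lia.
have abr_uniq : uniq [:: a, b & r].
  rewrite /= !inE negb_or ab r_uniq andbT.
  by apply/andP; split; apply/negP => /r_out; rewrite !inE eqxx ?orbT.
have [s s_path s_sub] : exists2 s, is_kpath e m s & {subset s <= [set x in [:: a, b & r]]}.
  by apply: all_sets; rewrite cardsE (card_uniqP abr_uniq) /= r_size; lia.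
have [s_size s_uniq _] := and3P s_path.
have [_ s_abr] : (size s = size [:: a, b & r]) * (s =i [:: a, b & r]).
  apply: uniq_min_size => // [x /s_sub | ]; first by rewrite inE.
  by rewrite (eqP s_size) /= r_size; lia.
by apply: (kpath_connect e_sym s_path); rewrite s_abr !inE eqxx ?orbT.
Qed.

End PathVertexCover.

Section InducedSubgraph.

Variables (T' T : finType) (f : T' -> T) (e : rel T).

Lemma simple_graph_relpre : simple_graph e -> simple_graph (relpre f e).
Proof. by case=> e_sym e_irr; split=> [x y | x] /=; [apply: e_sym | apply: e_irr]. Qed.

Hypothesis f_inj : injective f.

Lemma is_kpath_relpre m s : is_kpath (relpre f e) m s = is_kpath e m (map f s).
Proof.
by rewrite /is_kpath size_map (map_inj_uniq f_inj); case: s => //= x s; rewrite path_map.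
Qed.

Lemma kpath_in_all_sets_relpre m :
  kpath_in_all_sets e m -> kpath_in_all_sets (relpre f e) m.
Proof.
move=> all_sets V m_V.
have [t t_path t_sub] := all_sets (f @: V) ltac:(by rewrite card_imset).
have /subset_mapP[s s_V t_eq] : {subset t <= map f (enum V)}.
  by move=> y /t_sub/imsetP[x xV ->]; rewrite map_f ?mem_enum.
exists s; first by rewrite is_kpath_relpre -t_eq.
by move=> x /(allP s_V) /=; rewrite mem_enum.
Qed.

End InducedSubgraph.

Lemma traceable_of_kpath_in_all_sets (U : finType) (h : rel U) j :
  #|U| = j.+1 -> 2 <= j -> simple_graph h ->
  (connected_graph h -> psi h j = 2 -> psi h j.+1 = 1) ->
  kpath_in_all_sets h j -> exists s, is_kpath h j.+1 s.
Proof.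
move=> U_card j_ge2 [h_sym _] hyp all_j.
have j_range : 0 < j <= #|U| by rewrite U_card; lia.
have h_conn : connected_graph h.
  by apply: (kpath_in_all_sets_connected h_sym _ all_j); rewrite U_card; lia.
have h_psi2 : psi h j = 2 by rewrite ((psi_maxP h j_range).2 all_j) U_card subSnn.
have N_range : 0 < j.+1 <= #|U| by rewrite U_card leqnn.
have psi_N : psi h j.+1 = #|U| - j.+1 + 1 by rewrite U_card subnn; exact: hyp.
have [s s_path _] := (psi_maxP h N_range).1 psi_N [set: U] ltac:(by rewrite cardsT).
by exists s.
Qed.

Lemma kpath_in_all_sets_succ (T : finType) (e : rel T) j :
  simple_graph e -> 2 <= j < #|T| ->
  (forall (N : nat) (h : rel 'I_N),
      2 <= N <= #|T| -> simple_graph h -> connected_graph h ->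
      psi h N.-1 = 2 -> psi h N = 1) ->
  kpath_in_all_sets e j -> kpath_in_all_sets e j.+1.
Proof.
move=> e_simple /andP[j_ge2 j_lt_T] hyp all_j W j_W.
have /card_geqP[r [r_uniq r_size r_W]] := j_W.
pose W' : {set T} := [set x in r].
have W'_card : #|W'| = j.+1 by rewrite cardsE (card_uniqP r_uniq).
pose f : 'I_j.+1 -> T := enum_val \o cast_ord (esym W'_card).
have f_inj : injective f := inj_comp enum_val_inj (@cast_ord_inj _ _ _).
have f_simple : simple_graph (relpre f e) by apply: simple_graph_relpre.
have [|s s_path] := traceable_of_kpath_in_all_sets (card_ord j.+1) j_ge2 f_simple
  (hyp j.+1 (relpre f e) _ f_simple) (kpath_in_all_sets_relpre f_inj all_j).
  by rewrite ltnS (ltnW j_ge2).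
exists (map f s); first by rewrite -is_kpath_relpre.
move=> _ /mapP[i _ ->]; apply: r_W.
by have := enum_valP (cast_ord (esym W'_card) i); rewrite inE.
Qed.

Theorem mainTheorem10 (T : finType) (e : rel T) (k : nat) :
  simple_graph e ->
  3 <= #|T| ->
  2 <= k < #|T| ->
  (forall (N : nat) (h : rel 'I_N),
      2 <= N <= #|T| -> simple_graph h -> connected_graph h ->
      psi h N.-1 = 2 -> psi h N = 1) ->
  psi e k = #|T| - k + 1 ->
  forall j : nat, k < j <= #|T| -> psi e j = #|T| - j + 1.
Proof.
move=> e_simple _ /andP[k_ge2 k_lt_T] hyp psi_k j /andP[k_lt_j j_le_T].
have k_range : 0 < k <= #|T| by lia.
have all_from_k i : k <= i <= #|T| -> kpath_in_all_sets e i.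
  elim: i => [|i IHi] /andP[k_le_i i_le_T]; first by lia.
  rewrite leq_eqVlt in k_le_i; case/orP: k_le_i => [/eqP <- | k_le_i].
    exact: (psi_maxP e k_range).1.
  by apply: kpath_in_all_sets_succ => //; [lia | apply: IHi; lia].
have j_range : 0 < j <= #|T| by lia.
by apply: (psi_maxP e j_range).2; apply: all_from_k; lia.
Qed.
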